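(* Let $f(t)=\sum_{n=1}^{\infty}t^{n}/n^{n}=t\int_0^1x^{-tx}\,dx$. Then $f(t)\to-1$ as $t\to-\infty$ along the real axis.
   Context: $x^{-tx}=\exp(-tx\ln x)$ for $x\in(0,1]$. *)

From Stdlib Require Import Reals.
From Coquelicot Require Import Coquelicot.
Open Scope R_scope.

Definition sophf (t : R) : R :=
  Series (fun n : nat => t ^ (S n) / (INR (S n)) ^ (S n)).

(* Expanding exp (- t x ln x) in powers of t and integrating termwise, the
   moments  \int_0^1 (x ln x)^k dx = (-1)^k k! / (k+1)^(k+1)  (integration by
   parts in the family  \int_0^1 x^a (x ln x)^j dx) give
   sophf t = t \int_0^1 exp (- t x ln x) dx.
   For s = - t -> +oo the quantity  s \int_0^1 exp (s x ln x) dx  tends to 1: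
   it is at least 1 - exp (- s) because x ln x >= x - 1, and splitting [0, 1]
   at eta < a and bounding x ln x by x ln eta, by - eta (1 - a) and by
   a (x - 1) on the three pieces bounds it by
   1 / (- ln eta) + 2 / (s (eta (1 - a))^2) + 1 / a, which is close to 1 when
   eta is small, a is close to 1 and s is large. *)

From Stdlib Require Import Reals Lra Lia Factorial.
From Coquelicot Require Import Coquelicot.
Open Scope R_scope.

Lemma ln_nonpos x : x <= 0 -> ln x = 0.
Proof.
  intros Hx. unfold ln. destruct (Rlt_dec 0 x) as [Hpos | _]; [exfalso; lra | reflexivity].
Qed.

Lemma ln_le_sub_1 y : 0 < y -> ln y <= y - 1.
Proof.
  intros Hy. rewrite <- (ln_exp (y - 1)). apply ln_le; [exact Hy |].
  pose proof (exp_ineq1_le (y - 1)). lra.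
Qed.

Lemma exp_le_exp x y : x <= y -> exp x <= exp y.
Proof.
  intros [Hlt | ->]; [apply Rlt_le, exp_increasing, Hlt | apply Rle_refl].
Qed.

Lemma exp_ge_sqr_div_2 y : 0 <= y -> y ^ 2 / 2 <= exp y.
Proof.
  intros Hy. pose proof (exp_ge_taylor y 2 Hy) as H.
  simpl in H. unfold fact in H. simpl in H. nra.
Qed.

Lemma mul_exp_neg_le y : 0 < y -> y * exp (- y) <= 2 / y.
Proof.
  intros Hy. rewrite exp_Ropp.
  pose proof (exp_ge_sqr_div_2 y (Rlt_le _ _ Hy)). pose proof (exp_pos y).
  apply (Rmult_le_reg_r (y * exp y)); [nra |].
  field_simplify; nra.
Qed.

Definition xlnx (x : R) : R := x * ln x.

Lemma xlnx_le_0 x : x <= 1 -> xlnx x <= 0.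
Proof.
  intros Hx. unfold xlnx. destruct (Rle_lt_dec x 0) as [Hneg | Hpos].
  - rewrite ln_nonpos; lra.
  - assert (ln x <= 0) by (rewrite <- ln_1; apply ln_le; lra). nra.
Qed.

Lemma sub_1_le_xlnx x : x - 1 <= xlnx x.
Proof.
  unfold xlnx. destruct (Rle_lt_dec x 0) as [Hneg | Hpos].
  - rewrite ln_nonpos; lra.
  - pose proof (ln_le_sub_1 (/ x) (Rinv_0_lt_compat _ Hpos)) as H.
    rewrite ln_Rinv in H by lra.
    apply (Rmult_le_compat_l x) in H; [| lra].
    rewrite Rmult_minus_distr_l, Rinv_r in H; lra.
Qed.

Lemma Rabs_xlnx_le_1 x : 0 <= x <= 1 -> Rabs (xlnx x) <= 1.
Proof.
  intros Hx. pose proof (xlnx_le_0 x). pose proof (sub_1_le_xlnx x).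
  apply Rabs_le. lra.
Qed.

Lemma xlnx_le_mul_sub_1 x : 0 <= x -> xlnx x <= x * (x - 1).
Proof.
  intros Hx. unfold xlnx. destruct (Req_dec x 0) as [-> | Hx0]; [lra |].
  apply Rmult_le_compat_l; [lra |]. apply ln_le_sub_1. lra.
Qed.

Lemma xlnx_le_mul_ln x eta : 0 <= x <= eta -> xlnx x <= x * ln eta.
Proof.
  intros Hx. unfold xlnx. destruct (Req_dec x 0) as [-> | Hx0]; [lra |].
  apply Rmult_le_compat_l; [lra |]. apply ln_le; lra.
Qed.

Lemma Rabs_xlnx_le_inv_ln x : 0 < x < 1 -> Rabs (xlnx x) <= 2 / (- ln x).
Proof.
  intros Hx. assert (Hln : ln x < 0) by (rewrite <- ln_1; apply ln_increasing; lra).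
  replace (Rabs (xlnx x)) with (- ln x * exp (- - ln x)).
  - apply mul_exp_neg_le. lra.
  - rewrite Ropp_involutive, exp_ln by lra. unfold xlnx.
    rewrite Rabs_left1 by nra. ring.
Qed.

Lemma xlnx_continuous x : continuous xlnx x.
Proof.
  destruct (Rtotal_order x 0) as [Hneg | [-> | Hpos]].
  - apply (continuous_ext_loc _ (fun _ => 0)).
    + exists (mkposreal (- x) ltac:(lra)). intros y Hy.
      apply Rabs_lt_between' in Hy. simpl in Hy.
      unfold xlnx. rewrite ln_nonpos by lra. symmetry. apply Rmult_0_r.
    + apply continuous_const.
  - apply continuity_pt_filterlim. intros eps Heps.
    exists (Rmin 1 (exp (- (2 / eps)))). split.
    { apply Rmin_pos; [lra | apply exp_pos]. }
    intros y [_ Hy]. simpl in *. unfold R_dist in *.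
    replace (xlnx 0) with 0 by (unfold xlnx; ring). rewrite !Rminus_0_r in *.
    pose proof (Rmin_l 1 (exp (- (2 / eps)))). pose proof (Rmin_r 1 (exp (- (2 / eps)))).
    destruct (Rle_lt_dec y 0).
    + unfold xlnx. rewrite ln_nonpos, Rmult_0_r, Rabs_R0 by lra. lra.
    + rewrite Rabs_pos_eq in Hy by lra.
      assert (Hln : ln y < - (2 / eps)).
      { rewrite <- (ln_exp (- (2 / eps))). apply ln_increasing; lra. }
      eapply Rle_lt_trans; [apply Rabs_xlnx_le_inv_ln; lra |].
      assert (0 < 2 / eps) by (apply Rdiv_lt_0_compat; lra).
      apply Rlt_div_l; [lra |].
      assert (eps * (2 / eps) = 2) by (field; lra). nra.
  - apply (ex_derive_continuous xlnx). unfold xlnx. auto_derive. lra.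
Qed.

Lemma is_RInt_derive_open_left (F f : R -> R) (a b : R) :
  a < b ->
  (forall x, a < x <= b -> is_derive F x (f x)) ->
  (forall x, continuous f x) ->
  continuous F a ->
  is_RInt f a b (F b - F a).
Proof.
  intros Hab HF Hf HFa.
  (* Both sides, as functions of the lower bound, are continuous at [a] and
     agree on (a, b]. *)
  set (I := fun e => RInt f e b).
  assert (Hex : forall u v, ex_RInt f u v).
  { intros u v. apply (ex_RInt_continuous (V := R_CompleteNormedModule)). auto. }
  assert (HI : forall e, a < e <= b -> I e = F b - F e).
  { intros e He. apply is_RInt_unique.
    apply (is_RInt_derive (V := R_CompleteNormedModule) F f); intros x Hx;
      rewrite Rmin_left, Rmax_right in Hx by lra; [apply HF; lra | apply Hf]. }
  assert (Hnear : at_right a (fun e => F b - F e = I e)).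
  { exists (mkposreal (b - a) ltac:(lra)). intros e He Hae.
    apply Rabs_lt_between' in He. simpl in He. symmetry. apply HI. lra. }
  assert (Hlim_I : filterlim I (at_right a) (locally (I a))).
  { apply (filterlim_filter_le_1 (F := locally a)); [apply filter_le_within |].
    apply (continuous_RInt_2 (V := R_CompleteNormedModule) f a b).
    apply filter_forall. intros z. apply (RInt_correct (V := R_CompleteNormedModule)). apply Hex. }
  assert (Hlim_F : filterlim I (at_right a) (locally (F b - F a))).
  { apply (filterlim_ext_loc (fun e => F b - F e)); [exact Hnear |].
    apply (filterlim_filter_le_1 (F := locally a)); [apply filter_le_within |].
    apply (continuous_minus (fun _ => F b) F); [apply continuous_const | exact HFa]. }
  replace (F b - F a) with (I a).
  - apply (RInt_correct (V := R_CompleteNormedModule)). apply Hex.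
  - apply (filterlim_locally_unique (F := at_right a) I);
      [exact Hlim_I | exact Hlim_F].
Qed.

Definition xlnx_moment (a j : nat) : R := RInt (fun x => x ^ a * xlnx x ^ j) 0 1.

Lemma continuous_pow_mul_xlnx_pow a j x : continuous (fun y => y ^ a * xlnx y ^ j) x.
Proof.
  apply (continuous_mult (fun y => y ^ a) (fun y => xlnx y ^ j)).
  - apply (ex_derive_continuous (fun y => y ^ a)). auto_derive. auto.
  - apply (continuous_comp xlnx (fun z => z ^ j)); [apply xlnx_continuous |].
    apply (ex_derive_continuous (fun z => z ^ j)). auto_derive. auto.
Qed.

Lemma ex_RInt_pow_mul_xlnx_pow a j u v : ex_RInt (fun y => y ^ a * xlnx y ^ j) u v.
Proof.
  apply (ex_RInt_continuous (V := R_CompleteNormedModule)). intros x _.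
  apply continuous_pow_mul_xlnx_pow.
Qed.

Lemma is_derive_pow_mul_xlnx_pow a j x : 0 < x ->
  is_derive (fun y => y ^ S a * xlnx y ^ S j) x
    ((INR a + INR (S j) + 1) * (x ^ a * xlnx x ^ S j) + INR (S j) * (x ^ S a * xlnx x ^ j)).
Proof.
  intros Hx. unfold xlnx. auto_derive; [lra |].
  change (match a with 0%nat => 1 | S _ => INR a + 1 end) with (INR (S a)).
  change (match j with 0%nat => 1 | S _ => INR j + 1 end) with (INR (S j)).
  rewrite !S_INR, <- !tech_pow_Rmult. field. lra.
Qed.

Lemma xlnx_moment_succ a j :
  xlnx_moment a (S j) = - INR (S j) / (INR a + INR (S j) + 1) * xlnx_moment (S a) j.
Proof.
  set (c := INR a + INR (S j) + 1).
  assert (Hc : 0 < c) by (unfold c; pose proof (pos_INR a); pose proof (pos_INR (S j)); lra).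
  set (f := fun x => c * (x ^ a * xlnx x ^ S j) + INR (S j) * (x ^ S a * xlnx x ^ j)).
  assert (Hlin : is_RInt f 0 1 (c * xlnx_moment a (S j) + INR (S j) * xlnx_moment (S a) j)).
  { apply (is_RInt_plus (V := R_NormedModule)); apply (is_RInt_scal (V := R_NormedModule));
      apply (RInt_correct (V := R_CompleteNormedModule)); apply ex_RInt_pow_mul_xlnx_pow. }
  assert (Hftc : is_RInt f 0 1 (1 ^ S a * xlnx 1 ^ S j - 0 ^ S a * xlnx 0 ^ S j)).
  { apply (is_RInt_derive_open_left (fun y => y ^ S a * xlnx y ^ S j)); [lra | | |].
    - intros x Hx. apply is_derive_pow_mul_xlnx_pow. lra.
    - intros x. apply (continuous_plus (V := R_NormedModule)
        (fun y => c * (y ^ a * xlnx y ^ S j)) (fun y => INR (S j) * (y ^ S a * xlnx y ^ j)));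
        apply (continuous_mult (K := R_AbsRing) (fun _ => _));
        apply continuous_const || apply continuous_pow_mul_xlnx_pow.
    - apply continuous_pow_mul_xlnx_pow. }
  replace (1 ^ S a * xlnx 1 ^ S j - 0 ^ S a * xlnx 0 ^ S j) with 0 in Hftc
    by (unfold xlnx; rewrite ln_1; simpl; ring).
  assert (Hparts : c * xlnx_moment a (S j) + INR (S j) * xlnx_moment (S a) j = 0).
  { rewrite <- (is_RInt_unique _ _ _ _ Hlin). exact (is_RInt_unique _ _ _ _ Hftc). }
  apply (Rmult_eq_reg_l c); [| lra].
  replace (c * (- INR (S j) / c * xlnx_moment (S a) j)) with (- (INR (S j) * xlnx_moment (S a) j))
    by (field; lra).
  lra.
Qed.

Lemma xlnx_moment_eq j : forall a,
  xlnx_moment a j = (-1) ^ j * INR (fact j) / (INR a + INR j + 1) ^ S j.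
Proof.
  induction j as [| j IH]; intros a.
  - assert (Ha : 0 < INR a + 1) by (pose proof (pos_INR a); lra).
    replace ((-1) ^ 0 * INR (fact 0) / (INR a + INR 0 + 1) ^ 1)
      with (1 ^ S a / (INR a + 1) - 0 ^ S a / (INR a + 1))
      by (rewrite pow1, pow_i by lia; simpl; field; lra).
    apply is_RInt_unique,
      (is_RInt_derive (V := R_CompleteNormedModule) (fun y => y ^ S a / (INR a + 1))).
    + intros x _. auto_derive; [lra |].
      change (match a with 0%nat => 1 | S _ => INR a + 1 end) with (INR (S a)).
      rewrite S_INR. field. lra.
    + intros x _. apply (continuous_pow_mul_xlnx_pow a 0).
  - assert (Hd : 0 < INR a + INR (S j) + 1)
      by (pose proof (pos_INR a); pose proof (pos_INR (S j)); lra).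
    rewrite xlnx_moment_succ, IH, S_INR.
    replace (INR (S a)) with (INR a + 1) by (rewrite S_INR; ring).
    rewrite fact_simpl, mult_INR, S_INR. simpl.
    replace (INR a + 1 + INR j + 1) with (INR a + (INR j + 1) + 1) by ring.
    rewrite S_INR in Hd. field. split; [apply pow_nonzero |]; lra.
Qed.

Definition exp_term (y : R) (k : nat) : R := y ^ k / INR (fact k).

Lemma is_series_exp_term y : is_series (exp_term y) (exp y).
Proof.
  apply (is_series_ext (fun k => scal (y ^ k) (/ INR (fact k)))); [| apply is_exp_Reals].
  intros k. reflexivity.
Qed.

Lemma INR_fact_pos k : 0 < INR (fact k).
Proof. apply lt_0_INR, lt_O_fact. Qed.

Lemma is_series_exp_term_tail y N :
  is_series (fun k => exp_term y (S N + k)) (exp y - sum_n (exp_term y) N).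
Proof.
  apply is_series_incr_n; [lia |]. simpl pred.
  match goal with |- is_series _ ?l => replace l with (exp y) end; [apply is_series_exp_term |].
  unfold plus; simpl. rewrite Rplus_comm. symmetry. apply Rplus_minus.
Qed.

Lemma exp_taylor_rem_le y A N : Rabs y <= A ->
  Rabs (exp y - sum_n (exp_term y) N) <= exp A - sum_n (exp_term A) N.
Proof.
  intros HA.
  assert (Hterm : forall k, Rabs (exp_term y k) <= exp_term A k).
  { intros k. unfold exp_term. rewrite Rabs_div by (apply Rgt_not_eq, INR_fact_pos).
    rewrite (Rabs_pos_eq (INR _)), <- RPow_abs by (apply Rlt_le, INR_fact_pos).
    apply Rmult_le_compat_r; [apply Rlt_le, Rinv_0_lt_compat, INR_fact_pos |].
    apply pow_incr. split; [apply Rabs_pos | exact HA]. }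
  rewrite <- (is_series_unique _ _ (is_series_exp_term_tail y N)),
    <- (is_series_unique _ _ (is_series_exp_term_tail A N)).
  assert (HexA : ex_series (fun k => exp_term A (S N + k)))
    by (eexists; apply is_series_exp_term_tail).
  eapply Rle_trans; [apply Series_Rabs |].
  - apply (ex_series_le (V := R_CompleteNormedModule)) with (2 := HexA). intros k.
    change (norm (Rabs (exp_term y (S N + k)))) with (Rabs (Rabs (exp_term y (S N + k)))).
    rewrite Rabs_Rabsolu. apply Hterm.
  - apply Series_le; [| exact HexA]. intros k. split; [apply Rabs_pos | apply Hterm].
Qed.

Lemma is_lim_seq_exp_taylor_rem A : is_lim_seq (fun N => exp A - sum_n (exp_term A) N) 0.
Proof.
  replace 0 with (exp A - exp A) by ring.
  apply (is_lim_seq_minus' (fun _ => exp A)); [apply is_lim_seq_const | apply is_series_exp_term].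
Qed.

Lemma is_RInt_sum_n_exp_term (h : R -> R) (u v : R) (N : nat) :
  (forall k, ex_RInt (fun x => h x ^ k) u v) ->
  is_RInt (fun x => sum_n (exp_term (h x)) N) u v
    (sum_n (fun k => RInt (fun x => h x ^ k) u v / INR (fact k)) N).
Proof.
  intros Hpow.
  assert (Hk : forall k, is_RInt (fun x => exp_term (h x) k) u v
                 (RInt (fun x => h x ^ k) u v / INR (fact k))).
  { intros k. apply (is_RInt_ext (fun x => scal (/ INR (fact k)) (h x ^ k))).
    - intros x _. unfold exp_term, scal; simpl; unfold mult; simpl. field.
      apply Rgt_not_eq, INR_fact_pos.
    - replace (RInt (fun x => h x ^ k) u v / INR (fact k))
        with (scal (/ INR (fact k)) (RInt (fun x => h x ^ k) u v))
        by (unfold scal; simpl; unfold mult; simpl; field; apply Rgt_not_eq, INR_fact_pos).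
      apply (is_RInt_scal (V := R_NormedModule)), (RInt_correct (V := R_CompleteNormedModule)).
      apply Hpow. }
  induction N as [| N IH].
  - apply (is_RInt_ext (fun x => exp_term (h x) 0)); [intros x _; rewrite sum_O; reflexivity |].
    rewrite sum_O. apply Hk.
  - apply (is_RInt_ext (fun x => plus (sum_n (exp_term (h x)) N) (exp_term (h x) (S N)))).
    + intros x _. rewrite sum_Sn. reflexivity.
    + rewrite sum_Sn. apply (is_RInt_plus (V := R_NormedModule)); [exact IH | apply Hk].
Qed.

Lemma is_series_RInt_exp (h : R -> R) (u v M : R) :
  u <= v ->
  (forall x, u <= x <= v -> continuous h x) ->
  (forall x, u <= x <= v -> Rabs (h x) <= M) ->
  is_series (fun k => RInt (fun x => h x ^ k) u v / INR (fact k))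
    (RInt (fun x => exp (h x)) u v).
Proof.
  intros Huv Hh HM.
  assert (Hcont : forall g : R -> R, (forall y, continuous g y) ->
    ex_RInt (fun x => g (h x)) u v).
  { intros g Hg. apply (ex_RInt_continuous (V := R_CompleteNormedModule)). intros x Hx.
    rewrite Rmin_left, Rmax_right in Hx by lra.
    apply (continuous_comp h g); [apply Hh; lra | apply Hg]. }
  assert (Hpow : forall k, ex_RInt (fun x => h x ^ k) u v).
  { intros k. apply (Hcont (fun y => y ^ k)). intros y.
    apply (ex_derive_continuous (fun z => z ^ k)). auto_derive. auto. }
  assert (Hexp : ex_RInt (fun x => exp (h x)) u v).
  { apply Hcont. intros y. apply (ex_derive_continuous exp). auto_derive. auto. }
  set (partial N := sum_n (fun k => RInt (fun x => h x ^ k) u v / INR (fact k)) N).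
  set (I := RInt (fun x => exp (h x)) u v).
  assert (Hrem : is_lim_seq (fun N => I - partial N) 0).
  { apply is_lim_seq_abs_0.
    apply (is_lim_seq_le_le (fun _ => 0) _ (fun N => (v - u) * (exp M - sum_n (exp_term M) N))).
    - intros N. split; [apply Rabs_pos |].
      set (rem := fun x => exp (h x) - sum_n (exp_term (h x)) N).
      assert (Hdiff : is_RInt rem u v (I - partial N)).
      { apply (is_RInt_minus (V := R_NormedModule)).
        - apply (RInt_correct (V := R_CompleteNormedModule)), Hexp.
        - apply is_RInt_sum_n_exp_term, Hpow. }
      apply (norm_RInt_le_const (V := R_NormedModule) rem u v); [exact Huv | | exact Hdiff].
      intros x Hx. apply exp_taylor_rem_le, HM, Hx.
    - apply is_lim_seq_const.
    - replace (Finite 0) with (Rbar_mult (v - u) 0) by (simpl; f_equal; ring).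
      apply is_lim_seq_scal_l, is_lim_seq_exp_taylor_rem. }
  change (is_lim_seq partial I).
  apply (is_lim_seq_ext (fun N => I - (I - partial N))); [intros N; ring |].
  replace I with (I - 0) at 1 by ring.
  apply (is_lim_seq_minus' (fun _ => I)); [apply is_lim_seq_const | exact Hrem].
Qed.

Definition xpowx_integral (s : R) : R := RInt (fun x => exp (s * xlnx x)) 0 1.

Lemma RInt_pow_mul_xlnx_div_fact s k :
  RInt (fun x => (s * xlnx x) ^ k) 0 1 / INR (fact k) = (- s) ^ k / (INR k + 1) ^ S k.
Proof.
  rewrite (RInt_ext _ (fun x => scal (s ^ k) (x ^ 0 * xlnx x ^ k)))
    by (intros x _; unfold scal; simpl; unfold mult; simpl; rewrite Rpow_mult_distr; ring).
  rewrite (RInt_scal (V := R_CompleteNormedModule)) by apply ex_RInt_pow_mul_xlnx_pow.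
  change (scal (s ^ k) (xlnx_moment 0 k) / INR (fact k) = (- s) ^ k / (INR k + 1) ^ S k).
  rewrite xlnx_moment_eq. unfold scal; simpl; unfold mult; simpl.
  replace (- s) with (-1 * s) by ring. rewrite Rpow_mult_distr.
  pose proof (INR_fact_pos k).
  assert (0 < INR k + 1) by (pose proof (pos_INR k); lra).
  rewrite Rplus_0_l. field. repeat split; try apply pow_nonzero; lra.
Qed.

Lemma sophf_eq t : sophf t = t * xpowx_integral (- t).
Proof.
  assert (Hser : is_series (fun k => t ^ k / (INR k + 1) ^ S k) (xpowx_integral (- t))).
  { apply (is_series_ext (fun k => RInt (fun x => (- t * xlnx x) ^ k) 0 1 / INR (fact k))).
    - intros k. rewrite RInt_pow_mul_xlnx_div_fact, Ropp_involutive. reflexivity.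
    - apply (is_series_RInt_exp _ 0 1 (Rabs t)); [lra | |].
      + intros x _. apply (continuous_mult (fun _ => - t) xlnx);
          [apply continuous_const | apply xlnx_continuous].
      + intros x Hx. rewrite Rabs_mult, Rabs_Ropp.
        pose proof (Rabs_xlnx_le_1 x Hx). pose proof (Rabs_pos t). nra. }
  unfold sophf. apply is_series_unique.
  apply (is_series_ext (fun k => scal t (t ^ k / (INR k + 1) ^ S k))).
  - intros k. rewrite S_INR. unfold scal; simpl; unfold mult; simpl. field.
    pose proof (pos_INR k). split; [apply pow_nonzero |]; lra.
  - apply (is_series_scal_l (V := R_NormedModule)), Hser.
Qed.

Lemma is_RInt_exp_affine k d u v : k <> 0 ->
  is_RInt (fun x => exp (k * x + d)) u v ((exp (k * v + d) - exp (k * u + d)) / k).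
Proof.
  intros Hk.
  replace ((exp (k * v + d) - exp (k * u + d)) / k)
    with (exp (k * v + d) / k - exp (k * u + d) / k) by (field; exact Hk).
  apply (is_RInt_derive (V := R_CompleteNormedModule) (fun x => exp (k * x + d) / k)).
  - intros x _. auto_derive; [exact I |]. field. exact Hk.
  - intros x _. apply (ex_derive_continuous (fun x => exp (k * x + d))). auto_derive. exact I.
Qed.

Lemma RInt_exp_le_inv_Rabs_slope (h : R -> R) (k d u v : R) :
  u <= v -> k <> 0 -> k * u + d <= 0 -> k * v + d <= 0 ->
  ex_RInt (fun x => exp (h x)) u v ->
  (forall x, u < x < v -> h x <= k * x + d) ->
  RInt (fun x => exp (h x)) u v <= / Rabs k.
Proof.
  intros Huv Hk Hu Hv Hex Hh.
  assert (Hexp_le_1 : forall y, y <= 0 -> exp y <= 1)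
    by (intros y Hy; rewrite <- exp_0; apply exp_le_exp; exact Hy).
  eapply Rle_trans.
  - apply (RInt_le _ (fun x => exp (k * x + d)));
      [exact Huv | exact Hex | eexists; apply is_RInt_exp_affine, Hk |].
    intros x Hx. apply exp_le_exp, Hh, Hx.
  - rewrite (is_RInt_unique _ _ _ _ (is_RInt_exp_affine k d u v Hk)).
    pose proof (exp_pos (k * u + d)). pose proof (exp_pos (k * v + d)).
    pose proof (Hexp_le_1 _ Hu). pose proof (Hexp_le_1 _ Hv).
    destruct (Rlt_or_le 0 k) as [Hpos | Hneg].
    + rewrite Rabs_pos_eq by lra. unfold Rdiv. rewrite <- (Rmult_1_l (/ k)) at 2.
      apply Rmult_le_compat_r; [apply Rlt_le, Rinv_0_lt_compat, Hpos | lra].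
    + rewrite Rabs_left by lra.
      replace ((exp (k * v + d) - exp (k * u + d)) / k)
        with ((exp (k * u + d) - exp (k * v + d)) * / - k) by (field; exact Hk).
      rewrite <- (Rmult_1_l (/ - k)) at 2.
      apply Rmult_le_compat_r; [apply Rlt_le, Rinv_0_lt_compat; lra | lra].
Qed.

Section XpowxIntegralBounds.

Variable s : R.
Hypothesis Hs : 0 < s.

Lemma ex_RInt_exp_mul_xlnx u v : ex_RInt (fun x => exp (s * xlnx x)) u v.
Proof.
  apply (ex_RInt_continuous (V := R_CompleteNormedModule)). intros x _.
  apply (continuous_comp xlnx (fun y => exp (s * y))); [apply xlnx_continuous |].
  apply (ex_derive_continuous (fun y => exp (s * y))). auto_derive. exact I.
Qed.

Lemma xpowx_integral_lower : 1 - exp (- s) <= s * xpowx_integral s.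
Proof.
  assert (Hle : RInt (fun x => exp (s * x + - s)) 0 1 <= xpowx_integral s).
  { apply RInt_le; [lra | eexists; apply is_RInt_exp_affine; lra | apply ex_RInt_exp_mul_xlnx |].
    intros x Hx. apply exp_le_exp. pose proof (sub_1_le_xlnx x). nra. }
  rewrite (is_RInt_unique _ _ _ _ (is_RInt_exp_affine s (- s) 0 1 ltac:(lra))) in Hle.
  replace (s * 1 + - s) with 0 in Hle by ring. replace (s * 0 + - s) with (- s) in Hle by ring.
  rewrite exp_0 in Hle.
  apply (Rmult_le_compat_l s) in Hle; [| lra].
  replace (s * ((1 - exp (- s)) / s)) with (1 - exp (- s)) in Hle by (field; lra).
  exact Hle.
Qed.

Lemma RInt_exp_mul_xlnx_head eta : 0 < eta < 1 ->
  s * RInt (fun x => exp (s * xlnx x)) 0 eta <= / (- ln eta).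
Proof.
  intros Heta. assert (Hln : ln eta < 0) by (rewrite <- ln_1; apply ln_increasing; lra).
  assert (H : RInt (fun x => exp (s * xlnx x)) 0 eta <= / Rabs (s * ln eta)).
  { assert (Hk : s * ln eta < 0) by nra.
    apply (RInt_exp_le_inv_Rabs_slope _ (s * ln eta) 0);
      [lra | lra | lra | nra | apply ex_RInt_exp_mul_xlnx |].
    intros x Hx. pose proof (xlnx_le_mul_ln x eta ltac:(lra)). nra. }
  rewrite Rabs_left in H by nra.
  apply (Rmult_le_compat_l s) in H; [| lra].
  replace (s * / - (s * ln eta)) with (/ - ln eta) in H by (field; lra).
  exact H.
Qed.

Lemma RInt_exp_mul_xlnx_tail a : 0 < a < 1 ->
  s * RInt (fun x => exp (s * xlnx x)) a 1 <= / a.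
Proof.
  intros Ha.
  assert (H : RInt (fun x => exp (s * xlnx x)) a 1 <= / Rabs (s * a)).
  { assert (Hk : 0 < s * a) by nra.
    apply (RInt_exp_le_inv_Rabs_slope _ (s * a) (- (s * a)));
      [lra | lra | nra | lra | apply ex_RInt_exp_mul_xlnx |].
    intros x Hx. pose proof (xlnx_le_mul_sub_1 x ltac:(lra)).
    assert (x * (x - 1) <= a * (x - 1)) by nra. nra. }
  rewrite Rabs_pos_eq in H by nra.
  apply (Rmult_le_compat_l s) in H; [| lra].
  replace (s * / (s * a)) with (/ a) in H by (field; lra).
  exact H.
Qed.

Lemma RInt_exp_mul_xlnx_middle eta a : 0 < eta < a -> a < 1 ->
  s * RInt (fun x => exp (s * xlnx x)) eta a <= 2 / (s * (eta * (1 - a)) ^ 2).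
Proof.
  intros Heta Ha. set (c := eta * (1 - a)). assert (Hc : 0 < c) by (unfold c; nra).
  assert (H : RInt (fun x => exp (s * xlnx x)) eta a <= (a - eta) * exp (- (s * c))).
  { eapply Rle_trans; [apply Rle_abs |].
    apply abs_RInt_le_const; [lra | apply ex_RInt_exp_mul_xlnx |].
    intros x Hx. rewrite Rabs_pos_eq by (apply Rlt_le, exp_pos). apply exp_le_exp.
    pose proof (xlnx_le_mul_sub_1 x ltac:(lra)).
    assert (c <= x * (1 - x)) by (unfold c; nra). nra. }
  pose proof (mul_exp_neg_le (s * c) ltac:(nra)).
  pose proof (exp_pos (- (s * c))).
  apply (Rmult_le_compat_l s) in H; [| lra].
  eapply Rle_trans; [exact H |].
  replace (2 / (s * c ^ 2)) with (/ c * (2 / (s * c))) by (field; lra).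
  apply (Rmult_le_reg_l c); [exact Hc |].
  replace (c * (/ c * (2 / (s * c)))) with (2 / (s * c)) by (field; lra).
  assert (0 < s * c * exp (- (s * c))) by (apply Rmult_lt_0_compat; nra).
  nra.
Qed.

Lemma xpowx_integral_upper eta a : 0 < eta < a -> a < 1 ->
  s * xpowx_integral s <= / (- ln eta) + 2 / (s * (eta * (1 - a)) ^ 2) + / a.
Proof.
  intros Heta Ha.
  unfold xpowx_integral.
  rewrite <- (RInt_Chasles _ 0 eta 1), <- (RInt_Chasles _ eta a 1) by apply ex_RInt_exp_mul_xlnx.
  pose proof (RInt_exp_mul_xlnx_head eta ltac:(lra)).
  pose proof (RInt_exp_mul_xlnx_middle eta a Heta Ha).
  pose proof (RInt_exp_mul_xlnx_tail a ltac:(lra)).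
  unfold plus; simpl in *. rewrite !Rmult_plus_distr_l. lra.
Qed.

End XpowxIntegralBounds.

Lemma xpowx_integral_upper_eventually eps : 0 < eps ->
  exists M, forall s, M < s -> s * xpowx_integral s < 1 + eps.
Proof.
  intros Heps.
  (* Chosen so that the head bound is at most eps / 3 and the tail bound is
     1 + eps / 3; the middle bound then falls below eps / 3 for large s. *)
  set (a := / (1 + eps / 3)).
  set (eta := a * exp (- (3 / eps))).
  set (c := eta * (1 - a)).
  assert (Ha : 0 < a < 1).
  { unfold a. split; [apply Rinv_0_lt_compat; lra |].
    rewrite <- Rinv_1. apply Rinv_lt_contravar; lra. }
  assert (Hexp : 0 < exp (- (3 / eps)) < 1).
  { split; [apply exp_pos |]. rewrite <- exp_0. apply exp_increasing.
    enough (0 < 3 / eps) by lra. apply Rdiv_lt_0_compat; lra. }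
  assert (Heta : 0 < eta < a) by (unfold eta; split; nra).
  assert (Hc : 0 < c) by (unfold c; nra).
  assert (Hhead : / (- ln eta) <= eps / 3).
  { assert (Hln : - ln eta = ln (1 + eps / 3) + 3 / eps).
    { unfold eta, a.
      rewrite ln_mult, ln_Rinv, ln_exp by (try apply exp_pos; try apply Rinv_0_lt_compat; lra).
      ring. }
    assert (0 <= ln (1 + eps / 3)) by (rewrite <- ln_1; apply ln_le; lra).
    assert (0 < 3 / eps) by (apply Rdiv_lt_0_compat; lra).
    replace (eps / 3) with (/ (3 / eps)) by (field; lra).
    apply Rinv_le_contravar; lra. }
  exists (6 / (eps * c ^ 2)). intros s Hs.
  assert (Hc2 : 0 < eps * c ^ 2) by (apply Rmult_lt_0_compat; [lra | apply pow_lt, Hc]).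
  assert (Hs0 : 0 < s) by (pose proof (Rdiv_lt_0_compat 6 _ ltac:(lra) Hc2); lra).
  assert (Hmiddle : 2 / (s * c ^ 2) < eps / 3).
  { apply (Rmult_lt_compat_r (eps * c ^ 2)) in Hs; [| exact Hc2].
    replace (6 / (eps * c ^ 2) * (eps * c ^ 2)) with 6 in Hs by (field; lra).
    apply Rlt_div_l; [apply Rmult_lt_0_compat; [lra | apply pow_lt, Hc] |]. nra. }
  pose proof (xpowx_integral_upper s Hs0 eta a Heta (proj2 Ha)).
  replace (/ a) with (1 + eps / 3) in H by (unfold a; field; lra).
  fold c in H. lra.
Qed.

Lemma is_lim_mul_xpowx_integral : is_lim (fun s => s * xpowx_integral s) p_infty 1.
Proof.
  apply is_lim_spec. intros eps. pose proof (cond_pos eps) as Heps.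
  destruct (xpowx_integral_upper_eventually eps Heps) as [M HM].
  exists (Rmax M (Rabs (ln eps))). intros s Hs.
  pose proof (Rmax_l M (Rabs (ln eps))). pose proof (Rmax_r M (Rabs (ln eps))).
  pose proof (Rabs_pos (ln eps)). pose proof (Rabs_maj2 (ln eps)).
  assert (Hs0 : 0 < s) by lra.
  assert (Htail : exp (- s) < eps).
  { rewrite <- (exp_ln eps) by exact Heps. apply exp_increasing. lra. }
  pose proof (xpowx_integral_lower s Hs0). pose proof (HM s ltac:(lra)).
  apply Rabs_def1; lra.
Qed.

Theorem mainTheorem8 : is_lim sophf m_infty (-1).
Proof.
  apply (is_lim_ext (fun t => - (- t * xpowx_integral (- t)))).
  { intros t. rewrite sophf_eq. ring. }
  change (Finite (-1)) with (Rbar_opp 1). apply is_lim_opp.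
  apply (is_lim_comp (fun s => s * xpowx_integral s) Ropp m_infty 1 p_infty).
  - exact is_lim_mul_xpowx_integral.
  - change p_infty with (Rbar_opp m_infty). apply is_lim_opp, is_lim_id.
  - exists 0. intros t _. discriminate.
Qed.
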